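(* Let $n\ge 2$ be an integer and $A\subseteq L_n$. The space $(X_n,\tau(A))$ is locally compact if and only if $A=L_n$ (i.e. $\tau(A)$ is the Euclidean topology on $X_n$).
   Context: For $\overline{x},\overline{a}\in\mathbb R^n$ let $|\overline{x}-\overline{a}|$ be the Euclidean distance and $B(\overline{a},\epsilon)=\{\overline{x}\in\mathbb R^n:|\overline{x}-\overline{a}|<\epsilon\}$. Let $P_n=\{\overline{x}\in\mathbb R^n: x_n>0\}$, $L_n=\{\overline{x}\in\mathbb R^n: x_n=0\}$, $X_n=P_n\cup L_n$. For $\overline{a}\in L_n$ and $\epsilon>0$ put $\overline{a(\epsilon)}=(a_1,\dots,a_{n-1},\epsilon)$ and $\tilde B(\overline{a},\epsilon)=\{\overline{a}\}\cup B(\overline{a(\epsilon)},\epsilon)$. For $A\subseteq L_n$, the topology $\tau(A)$ on $X_n$ is generated by the local bases: at $\overline{a}\in P_n$, the sets $B(\overline{a},\epsilon)$ with $0<\epsilon<a_n$; at $\overline{a}\in A$, the sets $B(\overline{a},\epsilon)\cap X_n$ with $\epsilon>0$; at $\overline{a}\in L_n\setminus A$, the sets $\tilde B(\overline{a},\epsilon)$ with $\epsilon>0$. Note $\tau(L_n)$ is the Euclidean topology on $X_n$. *)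

From HB Require Import structures.
From mathcomp Require Import all_boot all_order all_algebra.
From mathcomp Require Import boolp classical_sets reals.
From Stdlib Require List.
Set Implicit Arguments. Unset Strict Implicit. Unset Printing Implicit Defensive.
Import Order.TTheory GRing.Theory Num.Theory.
Local Open Scope ring_scope.
Local Open Scope classical_set_scope.

Section Defs.
Variables (R : realType) (n : nat).

Definition pt := 'I_n -> R.

(* the n-th (last) coordinate x_n (0 when n = 0, never used) *)
Definition lastc (x : pt) : R :=
  match n return ('I_n -> R) -> R with
  | 0 => fun _ => 0
  | m.+1 => fun x => x ord_max
  end x.

Definition edist (x a : pt) : R := Num.sqrt (\sum_(i < n) (x i - a i) ^+ 2).

Definition eball (a : pt) (e : R) : set pt := [set x | edist x a < e].

Definition Pn : set pt := [set x | 0 < lastc x].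
Definition Ln : set pt := [set x | lastc x = 0].
Definition Xn : set pt := Pn `|` Ln.

Definition shift_up (a : pt) (e : R) : pt :=
  fun i => if val i == n.-1 then e else a i.

Definition tball (a : pt) (e : R) : set pt := [set a] `|` eball (shift_up a e) e.

Definition basic_nbhd (A : set pt) (a : pt) (B : set pt) : Prop :=
  [\/ Pn a /\ exists e, 0 < e /\ e < lastc a /\ B = eball a e,
      A a /\ exists e, 0 < e /\ B = eball a e `&` Xn
    | Ln a /\ ~ A a /\ exists e, 0 < e /\ B = tball a e].

Definition tau_open (A : set pt) (U : set pt) : Prop :=
  U `<=` Xn /\ forall a, U a -> exists B, basic_nbhd A a B /\ B `<=` U.

Definition tau_compact (A : set pt) (K : set pt) : Prop :=
  K `<=` Xn /\
  forall C : set (set pt), (forall U, C U -> tau_open A U) ->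
    (forall x, K x -> exists2 U, C U & U x) ->
    exists s : seq (set pt), (forall U, List.In U s -> C U) /\
      (forall x, K x -> exists2 U, List.In U s & U x).

Definition tau_locally_compact (A : set pt) : Prop :=
  forall x, Xn x -> exists U K, [/\ tau_open A U, U x, U `<=` K & tau_compact A K].

End Defs.

From Pilot Require Import Defs.
From mathcomp Require Import all_boot all_order all_algebra.
From mathcomp Require Import finmap boolp classical_sets reals topology normedtype.
From mathcomp Require Import ring lra.
From Stdlib Require List.
Set Implicit Arguments. Unset Strict Implicit. Unset Printing Implicit Defensive.
Import Order.TTheory GRing.Theory Num.Theory numFieldNormedType.Exports.
Local Open Scope ring_scope.
Local Open Scope classical_set_scope.

(* For A = L_n the topology is the Euclidean one on the closed half-space, in
   which closed boxes are compact by Heine-Borel.  If a lies in L_n but not in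
   A, every neighbourhood of a contains some tball a e, hence the sphere S of
   diameter e tangent to L_n at a, punctured at a.  S is closed in tau(A): away
   from a it is closed for the Euclidean topology, and the smaller neighbourhood
   tball a (e/2) of a misses it.  A compact neighbourhood of a would therefore
   make S compact, yet S is covered by the open sets {x_n > 1/(k+1)} without a
   finite subcover. *)

Lemma List_InP (T : eqType) (s : seq T) (x : T) : List.In x s <-> x \in s.
Proof.
elim: s => [|y s IH] //=; rewrite in_cons; split.
  by case=> [->|/IH ->]; rewrite ?eqxx ?orbT.
by case/orP => [/eqP ->|/IH]; [left|right].
Qed.

Lemma chain_cover_bound (T : Type) (W : set T) (V : nat -> set T)
    (s : seq (set T)) :
  {homo V : k l / (k <= l)%N >-> k `<=` l} ->
  (forall U, List.In U s -> U = W \/ exists k, U = V k) ->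
  exists k0, forall U, List.In U s -> U `<=` W `|` V k0.
Proof.
move=> V_homo; elim: s => [|U s IH] sWV; first by exists 0%N.
have [k0 hk0] := IH (fun U' sU' => sWV U' (or_intror sU')).
case: (sWV U (or_introl erefl)) => [->|[k ->]].
  by exists k0 => U' [<- x Wx|/hk0 //]; left.
exists (maxn k k0) => U' [<- x Vx|/hk0 U'WV x /U'WV [Wx|Vx]]; [right|by left|right].
  by apply: V_homo Vx; rewrite leq_maxl.
by apply: V_homo Vx; rewrite leq_maxr.
Qed.

Section Halfspace.
Variables (R : realType) (m : nat).
Local Notation N := m.+2.
Local Notation pt := (pt R N).
Local Notation Xn := (@Xn R N).
Local Notation Ln := (@Ln R N).

Definition sqdist (x y : pt) : R := \sum_(i < N) (x i - y i) ^+ 2.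

Lemma sqdist_ge0 x y : 0 <= sqdist x y.
Proof. by apply: sumr_ge0 => i _; apply: sqr_ge0. Qed.

Lemma sqdistxx x : sqdist x x = 0.
Proof. by rewrite /sqdist big1 // => i _; rewrite subrr expr0n. Qed.

Lemma sqdist_eq0 x y : sqdist x y = 0 -> x = y.
Proof.
move=> /eqP; rewrite psumr_eq0 => [/allP xy|i _]; last exact: sqr_ge0.
apply/funext => i; apply/eqP; rewrite -subr_eq0 -sqrf_eq0.
exact: implyP (xy i (mem_index_enum i)) isT.
Qed.

Lemma edist_ltE x y d : 0 < d -> (Defs.edist x y < d) = (sqdist x y < d ^+ 2).
Proof.
by move=> d0; rewrite -(ltr_sqrt (sqdist x y)) ?exprn_gt0 // sqrtr_sqr gtr0_norm.
Qed.

Lemma sqr_coord_le_sqdist x y i : (x i - y i) ^+ 2 <= sqdist x y.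
Proof.
by rewrite /sqdist (bigD1 i) //= lerDl; apply: sumr_ge0 => j _; apply: sqr_ge0.
Qed.

Lemma coord_lt_of_sqdist x y i d : 0 < d -> sqdist x y < d ^+ 2 -> `|x i - y i| < d.
Proof.
move=> d0 /(le_lt_trans (sqr_coord_le_sqdist x y i)).
by rewrite -real_normK ?num_real // ltr_pXn2r // ?nnegrE // ltW.
Qed.

Definition pt_of (v : 'rV[R]_N) : pt := fun i => v ord0 i.

Definition rv (x : pt) : 'rV[R]_N := \row_i x i.

Lemma rvK : cancel rv pt_of.
Proof. by move=> x; apply/funext => i; rewrite /pt_of mxE. Qed.

Lemma ball_rv_of_sqdist x y d : 0 < d -> sqdist y x < d ^+ 2 ->
  ball (rv x) d (rv y).
Proof.
move=> d0 yx; split=> // i j; rewrite !mxE /ball /= distrC.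
exact: coord_lt_of_sqdist.
Qed.

Lemma sqdist_lt_of_ball v w d : 0 < d -> ball v (d / N%:R) w ->
  sqdist (pt_of w) (pt_of v) < d ^+ 2.
Proof.
move=> d0 [_]; set t := d / N%:R => vw.
have t0 : 0 < t by rewrite divr_gt0 ?ltr0n.
have -> : d = N%:R * t by rewrite /t mulrC divfK ?pnatr_eq0.
clearbody t.
apply: (@le_lt_trans _ _ (\sum_(i < N) t ^+ 2)).
  apply: ler_sum => i _; have := vw ord0 i; rewrite /ball /= distrC => /ltW wv.
  by rewrite -real_normK ?num_real // lerXn2r // ?nnegrE // (le_trans _ wv).
rewrite sumr_const card_ord -[X in X < _]mulr_natl exprMn ltr_pM2r ?exprn_gt0 //.
by rewrite expr2 ltr_pMl ?ltr0n // ltr1n.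
Qed.

Lemma sqdist_nbhd_of_continuous (g : pt -> R) (O : set R) x :
  continuous (g \o pt_of) -> open O -> O (g x) ->
  exists2 r, 0 < r & forall y, sqdist y x < r ^+ 2 -> O (g y).
Proof.
move=> g_cont oO Ogx.
have : nbhs (rv x) ((g \o pt_of) @^-1` O).
  by apply: g_cont; apply: open_nbhs_nbhs; split; rewrite //= rvK.
move=> /nbhs_ballP[r r0 rO]; exists r => // y yx.
by have := rO _ (ball_rv_of_sqdist r0 yx); rewrite /= rvK.
Qed.

Lemma continuous_sqdist a : continuous (fun v : 'rV[R]_N => sqdist (pt_of v) a).
Proof.
apply: continuous_big => [|i _]; first exact: add_continuous.
pose c (v : 'rV[R]_N) := pt_of v i - a i.
have c_cont : continuous c.
  move=> v.
  apply: (@continuousB _ _ _ (fun w : 'rV[R]_N => pt_of w i) (fun=> a i)).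
    exact: coord_continuous.
  exact: cst_continuous.
by move=> v; apply: (@continuousM _ _ c c); exact: c_cont.
Qed.

Lemma XnE x : Xn x <-> 0 <= x ord_max.
Proof.
rewrite /Xn /Pn /Ln /= le_eqVlt eq_sym; split.
  by case=> [->|/eqP ->]; rewrite ?orbT ?eqxx.
by case/orP => [/eqP|]; [right|left].
Qed.

Lemma sqdist_shift_up a r x : a ord_max = 0 ->
  sqdist x (shift_up a r) = sqdist x a - 2 * r * x ord_max + r ^+ 2.
Proof.
move=> a0; rewrite /sqdist [LHS](bigD1 ord_max) // [in RHS](bigD1 ord_max) //=.
rewrite /shift_up /= eqxx a0 subr0.
rewrite (eq_bigr (fun i => (x i - a i) ^+ 2)); first by ring.
move=> i /negbTE iN; case: ifP => // /eqP iE.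
by move: iN; rewrite (_ : i = ord_max) ?eqxx //; apply: val_inj.
Qed.

Lemma eball_shift_upE a r x : a ord_max = 0 -> 0 < r ->
  eball (shift_up a r) r x <-> sqdist x a < 2 * r * x ord_max.
Proof.
move=> a0 r0; rewrite /eball /= edist_ltE // sqdist_shift_up //.
by split=> ?; lra.
Qed.

Lemma basic_nbhd_sub_sqdist (A : set pt) x r : Xn x -> 0 < r ->
  exists B, basic_nbhd A x B /\ B `<=` [set y | Xn y /\ sqdist y x < r ^+ 2].
Proof.
move=> Xx r0; case: Xx => [Px|Lx].
  pose d := Num.min r (x ord_max / 2).
  have d0 : 0 < d by rewrite lt_min r0 divr_gt0.
  have dr : d <= r by rewrite ge_min lexx.
  have dx : d <= x ord_max / 2 by rewrite ge_min lexx orbT.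
  exists (eball x d); split.
    by apply: Or31; split=> //; exists d; do !split=> //; rewrite /lastc /=; lra.
  move=> y; rewrite /eball /= edist_ltE // => yx; split.
    by apply/XnE; move: (coord_lt_of_sqdist ord_max d0 yx); rewrite ltr_norml; lra.
  by apply: (lt_le_trans yx); rewrite lerXn2r ?nnegrE ?(ltW d0) ?(ltW r0).
have [Ax|nAx] := pselect (A x).
  exists (eball x r `&` Xn); split; first by apply: Or32; split=> //; exists r.
  by move=> y [yx Xy]; split=> //; rewrite -edist_ltE.
have r20 : 0 < r / 2 by rewrite divr_gt0.
exists (tball x (r / 2)); split.
  by apply: Or33; split=> //; split=> //; exists (r / 2).
move=> y [->|/eball_shift_upE].
  by split; [right | rewrite sqdistxx exprn_gt0].
move=> /(_ Lx r20); rewrite [2 * _]mulrC divfK ?pnatr_eq0 // => yx.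
have := sqr_coord_le_sqdist y x ord_max; rewrite [x ord_max]Lx subr0 => yN.
have yN0 : 0 < y ord_max.
  by rewrite -(pmulr_rgt0 _ r0); apply: le_lt_trans yx; exact: sqdist_ge0.
split; first by apply/XnE; exact: ltW.
apply: (lt_le_trans yx); rewrite expr2 ler_pM2l //.
have : y ord_max * y ord_max < r * y ord_max.
  by rewrite -expr2; exact: le_lt_trans yx.
by rewrite ltr_pM2r // => /ltW.
Qed.

Lemma tau_open_of_sqdist (A U : set pt) : U `<=` Xn ->
  (forall x, U x ->
    exists2 r, 0 < r & forall y, Xn y -> sqdist y x < r ^+ 2 -> U y) ->
  tau_open A U.
Proof.
move=> UX Uqd; split=> // x Ux; have [r r0 rU] := Uqd x Ux.
have [B [xB BU]] := basic_nbhd_sub_sqdist A (UX x Ux) r0.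
by exists B; split=> // y /BU[]; exact: rU.
Qed.

Lemma tau_open_sqdist_lt (A : set pt) a r :
  tau_open A [set y | Xn y /\ sqdist y a < r].
Proof.
apply: tau_open_of_sqdist => [y [] //|x [_ xa]].
have [rho rho0 rhoa] := sqdist_nbhd_of_continuous (g := sqdist^~ a)
  (@continuous_sqdist a) (@open_lt _ r) xa.
by exists rho => // y Xy /rhoa.
Qed.

Lemma tau_open_Ln_sqdist (U : set pt) x : tau_open Ln U -> U x ->
  exists2 r, 0 < r & forall y, Xn y -> sqdist y x < r ^+ 2 -> U y.
Proof.
move=> [_ oU] /oU[B [xB BU]].
case: xB => [[_ [r [r0 [_ BE]]]]|[_ [r [r0 BE]]]|[Lx [nLx _]]]; last by case: nLx.
  by exists r => // y _ yx; apply: BU; rewrite BE /eball /= edist_ltE.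
by exists r => // y Xy yx; apply: BU; rewrite BE /eball /= edist_ltE.
Qed.

Lemma open_rV_of_tau_open_Ln (U : set pt) : tau_open Ln U ->
  open [set v : 'rV[R]_N | U (pt_of v) \/ pt_of v ord_max < 0].
Proof.
move=> oU; rewrite openE => v /= Uv; apply/nbhs_ballP.
have [r r0 rU] : exists2 r, 0 < r &
    forall w, ball v r w -> 0 <= pt_of w ord_max -> U (pt_of w).
  case: Uv => [Uv|vN].
    have [r r0 rU] := tau_open_Ln_sqdist oU Uv.
    exists (r / N%:R) => [|w vw /XnE Xw]; first by rewrite divr_gt0.
    exact: rU Xw (sqdist_lt_of_ball r0 vw).
  exists (- pt_of v ord_max) => [|w [_ /(_ ord0 ord_max)]].
    by rewrite oppr_gt0.
  by rewrite /ball /= ltr_norml /pt_of => /andP[? _] ?; lra.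
exists r => // w vw; have [wN|wN] := ltP (pt_of w ord_max) 0; first by right.
by left; exact: rU.
Qed.

Lemma tau_compact_Ln_of_compact (K : set pt) : K `<=` Xn ->
  compact [set v : 'rV[R]_N | K (pt_of v)] -> tau_compact Ln K.
Proof.
move=> KX; rewrite compact_cover => Kc; split=> // C C_open C_cover.
have [D DC DK] : finite_subset_cover C
    (fun U => [set v : 'rV[R]_N | U (pt_of v) \/ pt_of v ord_max < 0])
    [set v | K (pt_of v)].
  apply: Kc => [U /C_open/open_rV_of_tau_open_Ln //|v /C_cover[U CU Uv]].
  by exists U => //; left.
exists (enum_fset D); split=> [U /List_InP|x Kx].
  by move=> /DC; rewrite in_setE.
have [U DU] : cover [set U | U \in D]
    (fun U => [set v : 'rV[R]_N | U (pt_of v) \/ pt_of v ord_max < 0]) (rv x).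
  by apply: DK; rewrite /= rvK.
rewrite /= rvK => -[Ux|xN]; first by exists U => //; apply/List_InP.
by have /XnE := KX x Kx; rewrite leNgt xN.
Qed.

Definition box (a : pt) : set pt := [set x | forall i,
  (if i == ord_max then 0 else a i - 1) <= x i <= a i + 1].

Lemma box_sub_Xn a : box a `<=` Xn.
Proof. by move=> x /(_ ord_max); rewrite eqxx => /andP[x0 _]; apply/XnE. Qed.

Lemma compact_box a : compact [set v : 'rV[R]_N | box a (pt_of v)].
Proof.
pose lo i := if i == ord_max then 0 else a i - 1.
have -> : [set v : 'rV[R]_N | box a (pt_of v)] =
    [set v | forall i, `[lo i, a i + 1]%classic (v ord0 i)].
  by apply/seteqP; split=> v vbox i; move: (vbox i); rewrite /= in_itv.
apply: (@rV_compact _ _ (fun i => `[lo i, a i + 1]%classic)) => i.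
exact: segment_compact.
Qed.

Lemma Ln_locally_compact : tau_locally_compact Ln.
Proof.
move=> x Xx; exists [set y | Xn y /\ sqdist y x < 1], (box x); split.
- exact: tau_open_sqdist_lt.
- by split=> //; rewrite sqdistxx.
- move=> y [/XnE y0 yx] i.
  have : `|y i - x i| < 1 by apply: coord_lt_of_sqdist; rewrite ?expr1n.
  rewrite ltr_norml => /andP[? ?]; apply/andP; split; last by lra.
  by case: eqP => [->|_] //; lra.
- exact: tau_compact_Ln_of_compact (@box_sub_Xn x) (@compact_box x).
Qed.

Definition tangent_sphere (a : pt) (e : R) : set pt :=
  [set x | 0 < x ord_max /\ sqdist x a = e * x ord_max].

Lemma tangent_sphere_sub_tball a e : a ord_max = 0 -> 0 < e ->
  tangent_sphere a e `<=` tball a e.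
Proof.
move=> a0 e0 x [xN xa]; right; apply/eball_shift_upE => //.
by rewrite xa; have := mulr_gt0 e0 xN; lra.
Qed.

Lemma tangent_sphere_point a e h : a ord_max = 0 -> 0 < h -> h < e ->
  exists y, tangent_sphere a e y /\ y ord_max = h.
Proof.
move=> a0 h0 he; pose s := Num.sqrt (e * h - h ^+ 2).
pose y : pt := fun i =>
  if i == ord_max then h else if i == ord0 then a i + s else a i.
have yN : y ord_max = h by rewrite /y eqxx.
exists y; split=> //; split; first by rewrite yN.
rewrite /sqdist (bigD1 ord_max) //= (bigD1 ord0) //= big1; last first.
  move=> i /andP[i0 iN].
  by rewrite /y (negbTE i0) (negbTE iN) subrr expr0n.
rewrite yN /y /= a0 addr0 subr0 (addrC (a ord0)) addrK sqr_sqrtr; first by ring.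
by rewrite subr_ge0 expr2 ler_pM2r //; exact: ltW.
Qed.

Lemma tau_open_tangent_sphere_compl (A : set pt) a e : Ln a -> ~ A a -> 0 < e ->
  tau_open A [set x | Xn x /\ ~ tangent_sphere a e x].
Proof.
move=> La nAa e0; have a0 : a ord_max = 0 := La.
split=> [x [] //|x [Xx nSx]].
have [->|xa] := eqVneq x a.
  have e20 : 0 < e / 2 by rewrite divr_gt0.
  exists (tball a (e / 2)); split.
    by apply: Or33; split=> //; split=> //; exists (e / 2).
  move=> y [->|/eball_shift_upE]; first by split; [right | case; rewrite a0 ltxx].
  move=> /(_ a0 e20); rewrite [2 * _]mulrC divfK ?pnatr_eq0 // => ya.
  have yN : 0 < y ord_max.
    by rewrite -(pmulr_rgt0 _ e0); apply: le_lt_trans ya; exact: sqdist_ge0.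
  split; first by apply/XnE; exact: ltW.
  by case=> _ ya'; move: ya; rewrite ya' ltxx.
pose h y := sqdist y a - e * y ord_max.
have h_cont : continuous (h \o pt_of).
  move=> v; apply: (@continuousB _ _ _ (fun w => sqdist (pt_of w) a)
    (fun w => e * pt_of w ord_max)).
    exact: continuous_sqdist.
  apply: (@continuousM _ _ (fun=> e) (fun w => pt_of w ord_max)).
    exact: cst_continuous.
  exact: coord_continuous.
have hx : h x != 0.
  rewrite /h subr_eq0; apply/eqP => xa_eq.
  case: Xx => [xN|xN]; first exact: nSx.
  have xN0 : x ord_max = 0 := xN.
  by move: xa_eq; rewrite xN0 mulr0 => /sqdist_eq0 xaE; rewrite xaE eqxx in xa.
have [r r0 rh] := sqdist_nbhd_of_continuous h_cont (@open_neq _ 0) hx.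
have [B [xB BU]] := basic_nbhd_sub_sqdist A Xx r0.
exists B; split=> // y /BU[Xy yx]; split=> // -[_ ya].
by have /= := rh y yx; rewrite /h ya subrr eqxx.
Qed.

Lemma tau_open_above (A : set pt) c : 0 <= c -> tau_open A [set x | c < x ord_max].
Proof.
move=> c0; apply: tau_open_of_sqdist => [x /ltW xc|x xc].
  by apply/XnE; exact: le_trans xc.
have coord_cont : continuous ((fun y : pt => y ord_max) \o pt_of).
  exact: coord_continuous.
have [r r0 rc] := sqdist_nbhd_of_continuous coord_cont (@open_gt _ c) xc.
by exists r => // y _ /rc.
Qed.

Lemma not_locally_compact_at (A : set pt) a : Ln a -> ~ A a ->
  ~ tau_locally_compact A.
Proof.
move=> La nAa /(_ a (or_intror La)) [U [K [[_ oU] Ua UK [KX Kc]]]].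
have a0 : a ord_max = 0 := La.
have [e e0 SK] : exists2 e, 0 < e & tangent_sphere a e `<=` K.
  have [B [aB BU]] := oU a Ua.
  case: aB => [[Pa _]|[Aa _]|[_ [_ [e [e0 BE]]]]].
  - by move: Pa; rewrite /Pn /= /lastc /= a0 ltxx.
  - by case: nAa.
  exists e => // x /(tangent_sphere_sub_tball a0 e0) ?.
  by apply: UK; apply: BU; rewrite BE.
pose V k := [set x : pt | k.+1%:R^-1 < x ord_max].
pose W := [set x | Xn x /\ ~ tangent_sphere a e x].
pose C := [set U | U = W \/ exists k, U = V k].
have C_open : forall U, C U -> tau_open A U.
  move=> _ [->|[k ->]]; first exact: tau_open_tangent_sphere_compl.
  by apply: tau_open_above; rewrite invr_ge0.
have C_cover : forall x, K x -> exists2 U, C U & U x.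
  move=> x Kx; have [[xN _]|nSx] := pselect (tangent_sphere a e x); last first.
    by exists W; [left | split=> //; exact: KX].
  exists (V (Num.truncn (x ord_max)^-1)); first by right; eexists.
  by rewrite /V /= -invf_plt ?posrE ?ltr0n // truncnS_gt.
have [s [sC sK]] := Kc C C_open C_cover.
have V_homo : {homo V : k l / (k <= l)%N >-> k `<=` l}.
  move=> k l kl x; apply: le_lt_trans.
  by rewrite lef_pV2 ?posrE ?ltr0n // ler_nat ltnS.
have [k0 sWV] := chain_cover_bound V_homo sC.
pose h := Num.min k0.+1%:R^-1 (e / 2).
have h0 : 0 < h by rewrite lt_min invr_gt0 ltr0n divr_gt0.
have he : h < e by rewrite gt_min; apply/orP; right; lra.
have [y [Sy yN]] := tangent_sphere_point a0 h0 he.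
have [U' sU' U'y] := sK y (SK y Sy).
case: (sWV U' sU' y U'y) => [[_ []] //|].
by rewrite /V /= yN ltNge ge_min lexx.
Qed.

End Halfspace.

Theorem mainTheorem3 (R : realType) (n : nat) (A : set (pt R n)) :
  (2 <= n)%N -> A `<=` @Ln R n ->
  (tau_locally_compact A <-> A = @Ln R n).
Proof.
case: n A => [|[|m]] A // _ AL; split=> [lcA|->]; last exact: Ln_locally_compact.
apply/seteqP; split=> // a La; apply: contrapT => nAa.
exact: not_locally_compact_at La nAa lcA.
Qed.
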